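(* Let $G$ be a graph whose odd girth is $5$. If $E(G)=E_1\cup E_2$ with $E_1\cap E_2=\emptyset$, where $(V(G),E_1)$ is bipartite and $E_2$ is a matching, then $G$ admits an orientation in which every $5$-cycle of $G$ is alternating.
   Context: The odd girth of a graph is the length of its shortest odd cycle. An orientation assigns each edge exactly one direction. In an oriented graph, a subgraph that is a cycle is called alternating if at most one of its vertices has both positive in-degree and positive out-degree within that cycle (all others are sources or sinks of the cycle). *)

From mathcomp Require Import all_boot.
Set Implicit Arguments. Unset Strict Implicit. Unset Printing Implicit Defensive.

Definition simple_graph (V : finType) (e : rel V) : Prop :=
  symmetric e /\ irreflexive e.

Definition is_cycle (V : finType) (e : rel V) (k : nat) (c : 'I_k -> V) : Prop :=
  3 <= k /\ injective c /\ forall i : 'I_k, e (c i) (c (ordS i)).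

Definition odd_girth (V : finType) (e : rel V) (g : nat) : Prop :=
  (odd g /\ exists c : 'I_g -> V, is_cycle e c) /\
  forall k, odd k -> k < g -> forall c : 'I_k -> V, ~ is_cycle e c.

Definition edge_partition (V : finType) (e E1 E2 : rel V) : Prop :=
  symmetric E1 /\ symmetric E2 /\
  (forall x y, e x y = E1 x y || E2 x y) /\
  (forall x y, ~~ (E1 x y && E2 x y)).

Definition bipartite (V : finType) (E : rel V) : Prop :=
  exists f : V -> bool, forall x y, E x y -> f x != f y.

Definition matching (V : finType) (E : rel V) : Prop :=
  forall x y z, E x y -> E x z -> y = z.

(* An orientation of e: o x y means edge xy is directed x -> y; each edge gets
   exactly one direction. *)
Definition orientation (V : finType) (e o : rel V) : Prop :=
  (forall x y, o x y -> e x y) /\ (forall x y, e x y -> o x y (+) o y x).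

Definition cycle_mixed (V : finType) (o : rel V) (k : nat) (c : 'I_k -> V)
  (i : 'I_k) : bool :=
  (o (c (ord_pred i)) (c i) || o (c (ordS i)) (c i)) &&
  (o (c i) (c (ord_pred i)) || o (c i) (c (ordS i))).

(* Alternating: at most one vertex of the cycle is neither a source nor a sink. *)
Definition alternating (V : finType) (o : rel V) (k : nat) (c : 'I_k -> V) : Prop :=
  #|[pred i | cycle_mixed o c i]| <= 1.

From mathcomp Require Import all_boot.
Set Implicit Arguments. Unset Strict Implicit. Unset Printing Implicit Defensive.

(* Let f be a 2-colouring of E1.  Orient every edge whose ends get different
   colours from colour true to colour false, and every monochromatic edge
   (necessarily an E2-edge) arbitrarily.  On a cycle the bichromatic edges then
   alternate in direction, so only the ends of monochromatic edges can be mixed,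
   and a monochromatic edge has exactly one mixed end.  Since E2 is a matching,
   no two consecutive edges of a 5-cycle are monochromatic, and by parity of the
   number of colour changes a 5-cycle then has at most one monochromatic edge. *)

Lemma val_iter_ordS k n (i : 'I_k) : val (iter n (@ordS k) i) = (i + n) %% k.
Proof.
elim: n => [|n IHn] /=; first by rewrite addn0 modn_small.
by rewrite IHn -addn1 modnDml -addnA addn1.
Qed.

Lemma iter_ordS_neq k n (i : 'I_k) : 0 < n < k -> iter n (@ordS k) i != i.
Proof.
case/andP=> n_gt0 n_lt_k; apply/eqP => /(congr1 val).
rewrite val_iter_ordS -[X in _ = X](modn_small (ltn_ord i)) => /eqP.
rewrite eqn_mod_dvd ?leq_addr // addKn => /(dvdn_leq n_gt0).
by rewrite leqNgt n_lt_k.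
Qed.

Lemma ord_pred_neq k (i : 'I_k) : 1 < k -> ord_pred i != i.
Proof.
move=> k_gt1; apply/eqP => ipi; have := @iter_ordS_neq k 1 i k_gt1.
by rewrite /= -{1}ipi ord_predK eqxx.
Qed.

Lemma iter_ordS_period k (i : 'I_k) : iter k (@ordS k) i = i.
Proof. by apply: val_inj; rewrite val_iter_ordS modnDr modn_small. Qed.

Lemma iter_ordS_onto k (i j : 'I_k) : exists2 n, n < k & j = iter n (@ordS k) i.
Proof.
exists ((j + (k - i)) %% k); first by rewrite ltn_pmod // (leq_ltn_trans _ (ltn_ord i)).
apply: val_inj; rewrite val_iter_ordS modnDmr addnCA subnKC ?(ltnW (ltn_ord i)) //.
by rewrite modnDr modn_small.
Qed.

Definition mono_step k (b : 'I_k -> bool) (i : 'I_k) : bool := b i == b (ordS i).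

Section FiveCycle.
Variable b : 'I_5 -> bool.
Hypothesis mono_apart : forall i, ~~ (mono_step b i && mono_step b (ordS i)).

Lemma five_cycle_no_mono_steps_two_apart i : mono_step b i -> ~~ mono_step b (iter 2 (@ordS 5) i).
Proof.
move=> m0; apply/negP => m2.
have m1 : ~~ mono_step b (ordS i) by apply: contraNN (mono_apart i) => ->; rewrite m0.
have m3 : ~~ mono_step b (iter 3 (@ordS 5) i).
  by apply: contraNN (mono_apart (iter 2 (@ordS 5) i)) => ->; rewrite m2.
have m4 : ~~ mono_step b (iter 4 (@ordS 5) i).
  apply: contraNN (mono_apart (iter 4 (@ordS 5) i)) => ->.
  by rewrite -iterS iter_ordS_period m0.
(* Colour changes exactly at steps 1, 3 and 4: an odd number around the cycle. *)
move: m0 m1 m2 m3 m4; rewrite /mono_step -!iterS iter_ordS_period /=.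
by case: (b i); case: (b (ordS i)); case: (b _); case: (b _); case: (b _).
Qed.

Lemma five_cycle_mono_step_unique i j : mono_step b i -> mono_step b j -> i = j.
Proof.
have [[|[|[|[|[|n]]]]] // _ ->] := iter_ordS_onto i j => mi mj.
- by move: (mono_apart i); rewrite mi mj.
- by move: (five_cycle_no_mono_steps_two_apart mi); rewrite mj.
- move: (five_cycle_no_mono_steps_two_apart mj).
  by rewrite -iterD iter_ordS_period mi.
- move: (mono_apart (iter 4 (@ordS 5) i)).
  by rewrite -iterS iter_ordS_period mi mj.
Qed.

End FiveCycle.

Section ColourOrientation.
Variables (V : finType) (e : rel V) (f : V -> bool).
Hypotheses (e_sym : symmetric e) (e_irr : irreflexive e).

Definition colour_orient : rel V := fun x y =>
  e x y && if f x == f y then enum_rank x < enum_rank y else f x.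

Lemma colour_orientC x y : e x y -> colour_orient y x = ~~ colour_orient x y.
Proof.
move=> exy; rewrite /colour_orient e_sym exy /= eq_sym.
have [fxy|] := eqP; last by case: (f x); case: (f y).
have : enum_rank x != enum_rank y.
  by apply: contraTneq exy => /enum_rank_inj ->; rewrite e_irr.
by rewrite neq_ltn => /orP[] lt_xy; rewrite lt_xy ltnNge ltnW.
Qed.

Lemma colour_orient_orientation : orientation e colour_orient.
Proof.
split=> [x y /andP[] //|x y exy].
by rewrite (colour_orientC exy); case: (colour_orient x y).
Qed.

Lemma colour_orient_bichromatic x y : e x y -> f x != f y -> colour_orient x y = f x.
Proof. by rewrite /colour_orient => -> /negbTE ->. Qed.

End ColourOrientation.

Section CycleMixed.
Variables (V : finType) (e o : rel V) (k : nat) (c : 'I_k -> V).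
Hypotheses (oC : forall x y, e x y -> o y x = ~~ o x y)
  (c_step : forall i, e (c i) (c (ordS i))).

Lemma cycle_mixedE i :
  cycle_mixed o c i = (o (c (ord_pred i)) (c i) == o (c i) (c (ordS i))).
Proof.
have pred_step := c_step (ord_pred i); rewrite ord_predK in pred_step.
rewrite /cycle_mixed (oC (c_step i)) (oC pred_step).
by case: (o (c (ord_pred i)) (c i)); case: (o (c i) (c (ordS i))).
Qed.

End CycleMixed.

Section AtMostOneMixed.
Variables (k : nat) (b d : 'I_k -> bool).
Hypotheses (k_gt1 : 1 < k) (d_bichromatic : forall i, ~~ mono_step b i -> d i = b i)
  (mono_unique : forall i j, mono_step b i -> mono_step b j -> i = j).

Lemma mixed_at_mono_step i : d (ord_pred i) == d i ->
  (mono_step b i && (d i != b i)) ||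
  (mono_step b (ord_pred i) && (d (ord_pred i) == b (ord_pred i))).
Proof.
have dp : b (ord_pred i) != b i -> d (ord_pred i) = b (ord_pred i).
  by move=> nmp; apply: d_bichromatic; rewrite /mono_step ord_predK.
have di : b i != b (ordS i) -> d i = b i by apply: d_bichromatic.
rewrite /mono_step ord_predK.
have [mi|nmi] := boolP (b i == b (ordS i)).
  have nmp : b (ord_pred i) != b i.
    apply: contra (ord_pred_neq i k_gt1) => mp.
    by apply/eqP/mono_unique; rewrite /mono_step ?ord_predK.
  by rewrite (dp nmp) /=; move: nmp; case: (b i); case: (b _); case: (d i).
rewrite (di nmi) /=; case: (boolP (b _ == b i)) => [/eqP -> //| nmp].
by rewrite (dp nmp); move: nmp; case: (b i); case: (b _).
Qed.

Lemma at_most_one_mixed : #|[pred i | d (ord_pred i) == d i]| <= 1.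
Proof.
apply/card_le1_eqP => i j /mixed_at_mono_step Hi /mixed_at_mono_step Hj.
case/orP: Hi => /andP[mi di]; case/orP: Hj => /andP[mj dj].
- exact: mono_unique.
- by move: di; rewrite (mono_unique mi mj) dj.
- by move: dj; rewrite (mono_unique mj mi) di.
- exact/ord_pred_inj/mono_unique.
Qed.

End AtMostOneMixed.

Lemma cycle_mono_steps_apart (V : finType) (e E1 E2 : rel V) (f : V -> bool)
    k (c : 'I_k -> V) :
  (forall x y, e x y -> E1 x y || E2 x y) -> (forall x y, E1 x y -> f x != f y) ->
  symmetric E2 -> matching E2 -> is_cycle e c ->
  forall i, ~~ (mono_step (f \o c) i && mono_step (f \o c) (ordS i)).
Proof.
move=> eE E1f E2_sym E2_match [k_ge3 [c_inj c_step]] i.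
have mono_E2 j : mono_step (f \o c) j -> E2 (c j) (c (ordS j)).
  by move=> /eqP /= fcj; case/orP: (eE _ _ (c_step j)) => // /E1f; rewrite fcj eqxx.
apply/negP => /andP[/mono_E2 E2i /mono_E2 E2Si]; rewrite E2_sym in E2i.
have /c_inj/eqP := E2_match _ _ _ E2i E2Si.
by rewrite eq_sym (negbTE (@iter_ordS_neq k 2 i k_ge3)).
Qed.

Theorem mainTheorem10 (V : finType) (e E1 E2 : rel V) :
  simple_graph e ->
  odd_girth e 5 ->
  edge_partition e E1 E2 ->
  bipartite E1 ->
  matching E2 ->
  exists o : rel V, orientation e o /\
    forall c : 'I_5 -> V, is_cycle e c -> alternating o c.
Proof.
move=> [e_sym e_irr] _ [_ [E2_sym [eE _]]] [f E1f] E2_match.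
exists (colour_orient e f); split; first exact: colour_orient_orientation.
move=> c c_cycle; have [_ [_ c_step]] := c_cycle.
pose d i := colour_orient e f (c i) (c (ordS i)).
have mixedE i : cycle_mixed (colour_orient e f) c i = (d (ord_pred i) == d i).
  by rewrite /d ord_predK (cycle_mixedE (colour_orientC f e_sym e_irr) c_step).
rewrite /alternating (@eq_card _ _ [pred i | d (ord_pred i) == d i]) => [|i]; last first.
  by rewrite !inE mixedE.
apply: (@at_most_one_mixed _ (f \o c)) => // [i nmi|].
  exact: colour_orient_bichromatic.
apply: five_cycle_mono_step_unique.
by apply: (cycle_mono_steps_apart _ E1f E2_sym E2_match c_cycle) => x y; rewrite eE.
Qed.
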